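(* Let $b\in\mathbb{R}$ and $F(x)=x^2+x$. Consider the three-dimensional map on $\mathbb{R}^3$ $$w_{k+1}=w_k-\big(F(x_k+w_k)-F(x_k)\big)+z_k=-w_k^2-2x_kw_k+z_k,\qquad z_{k+1}=bw_k,\qquad x_{k+1}=x_k+w_k$$ (this is the map of a discrete-time memristor Murali-Lakshmanan-Chua circuit, or its dual, with step size $h=1$, $\alpha=\beta=1$, $\gamma=b$ and memristor nonlinearity $F$). Then $\Theta(x,w,z)=w+z-bx+x+x^2$ is a first integral of the map, so $\mathbb{R}^3$ is foliated into the invariant sets $\mathcal{M}(a)=\{(x,w,z)\in\mathbb{R}^3:\Theta(x,w,z)=a\}$, $a\in\mathbb{R}$, and for every $a\in\mathbb{R}$, along any orbit lying in $\mathcal{M}(a)$, setting $y_k=\sum_{j=0}^{k-1}z_j-z_0+bx_0$, the pair $(x_k,y_k)$ obeys the Hénon map $$x_{k+1}=-x_k^2+y_k+a,\qquad y_{k+1}=bx_k.$$ In particular, for every $a\in\mathbb{R}$ the dynamics of this Hénon map with parameters $a,b$ is embedded in the invariant set $\mathcal{M}(a)$.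
   Context: The map $(x,y)\mapsto(-x^2+y+a,\,bx)$ is topologically conjugate to the classical Hénon map $(X,Y)\mapsto(1-aX^2+Y,\,bX)$ via $x=aX$, $y=aY$ (for $a\neq0$). The sequence $y_k$ corresponds to the shifted incremental charge (or flux) variable of the circuit in the flux-charge domain. *)

From mathcomp Require Import all_boot all_order all_algebra.
From mathcomp Require Import reals.
Set Implicit Arguments. Unset Strict Implicit. Unset Printing Implicit Defensive.
Import Order.TTheory GRing.Theory Num.Theory.
Local Open Scope ring_scope.

Definition Fnl (R : realType) (x : R) : R := x ^+ 2 + x.

Definition mlc_map (R : realType) (b : R) (p : R * R * R) : R * R * R :=
  let: (x, w, z) := p in
  (x + w, w - (Fnl (x + w) - Fnl x) + z, b * w).

Definition Theta (R : realType) (b : R) (p : R * R * R) : R :=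
  let: (x, w, z) := p in w + z - b * x + x + x ^+ 2.

Definition Mset (R : realType) (b a : R) (p : R * R * R) : Prop := Theta b p = a.

Definition henon (R : realType) (a b : R) (q : R * R) : R * R :=
  (- q.1 ^+ 2 + q.2 + a, b * q.1).

Definition orbit (R : realType) (b : R) (p0 : R * R * R) (k : nat) : R * R * R :=
  iter k (mlc_map b) p0.
Definition xk (R : realType) (b : R) (p0 : R * R * R) (k : nat) : R :=
  (orbit b p0 k).1.1.
Definition zk (R : realType) (b : R) (p0 : R * R * R) (k : nat) : R :=
  (orbit b p0 k).2.

Definition yk (R : realType) (b : R) (p0 : R * R * R) (k : nat) : R :=
  \sum_(0 <= j < k) zk b p0 j - zk b p0 0 + b * xk b p0 0.

(** The running sum [y_k] satisfies [y_(k+1) = y_k + z_k],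
    and by induction [y_k + z_k = b x_k]; in particular [y_(k+1) = b x_k].  On the
    level set [Theta = a] the relation [w + z = a + b x - x - x^2] turns
    [x_(k+1) = x_k + w_k] into [-x_k^2 + (b x_k - z_k) + a = -x_k^2 + y_k + a]. *)
From Pilot Require Import Defs.
From mathcomp Require Import all_boot all_order all_algebra.
From mathcomp Require Import reals.
From mathcomp Require Import ring.
Import Order.TTheory GRing.Theory Num.Theory.
Local Open Scope ring_scope.

Section MlcMap.
Variables (R : realType) (b : R).

Lemma Theta_mlc_map (p : R * R * R) : Theta b (mlc_map b p) = Theta b p.
Proof. by case: p => [[x w] z]; rewrite /Theta /mlc_map /Fnl; ring. Qed.

Lemma mlc_map_Mset (a : R) (p : R * R * R) : Mset b a p -> Mset b a (mlc_map b p).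
Proof. by rewrite /Mset Theta_mlc_map. Qed.

Lemma mlc_map_x (p : R * R * R) :
  (mlc_map b p).1.1 = - p.1.1 ^+ 2 + (b * p.1.1 - p.2) + Theta b p.
Proof. by case: p => [[x w] z]; rewrite /Theta /=; ring. Qed.

Variable p0 : R * R * R.

Lemma orbitS (k : nat) : Defs.orbit b p0 k.+1 = mlc_map b (Defs.orbit b p0 k).
Proof. exact: iterS. Qed.

Lemma Theta_orbit (k : nat) : Theta b (Defs.orbit b p0 k) = Theta b p0.
Proof. by elim: k => [|k IHk] //; rewrite orbitS Theta_mlc_map. Qed.

Lemma ykS (k : nat) : yk b p0 k.+1 = yk b p0 k + zk b p0 k.
Proof. by rewrite /yk big_nat_recr //=; ring. Qed.

Lemma yk_add_zk (k : nat) : yk b p0 k + zk b p0 k = b * xk b p0 k.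
Proof.
elim: k => [|k IHk]; first by rewrite /yk big_geq //; ring.
rewrite ykS IHk /zk /xk orbitS.
by case: (Defs.orbit b p0 k) => [[x w] z] /=; ring.
Qed.

Lemma xkS (k : nat) : xk b p0 k.+1 = - xk b p0 k ^+ 2 + yk b p0 k + Theta b p0.
Proof.
have -> : yk b p0 k = b * xk b p0 k - zk b p0 k by rewrite -yk_add_zk; ring.
by rewrite /xk orbitS mlc_map_x Theta_orbit.
Qed.

End MlcMap.

Theorem mainTheorem6 (R : realType) (b : R) :
  (* Theta is a first integral *)
  (forall p : R * R * R, Theta b (mlc_map b p) = Theta b p) /\
  (* hence every level set M(a) is invariant *)
  (forall (a : R) (p : R * R * R), Mset b a p -> Mset b a (mlc_map b p)) /\
  (* along any orbit in M(a), (x_k, y_k) follows the Henon map *)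
  (forall (a : R) (p0 : R * R * R), Mset b a p0 ->
     forall k : nat,
       (xk b p0 k.+1, yk b p0 k.+1) = henon a b (xk b p0 k, yk b p0 k)).
Proof.
split; first exact: Theta_mlc_map.
split; first exact: mlc_map_Mset.
move=> a p0 <- k.
by rewrite /henon /= xkS ykS yk_add_zk.
Qed.
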